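(* Let $X$ be a metric space, $n\ge0$, and let $D^{(n+1)}_X$ be an $n$-dimensional control function of $X$. Define inductively $D^{(i+1)}_X(r)=D^{(i)}_X(3r)+2r$ for all $i\ge n+1$. Then for every $k\ge n+1$, $D^{(k)}_X$ is an $(n,k)$-dimensional control function of $X$.
   Context: A family of subsets of $X$ is $r$-disjoint if $d(a,b)\ge r$ whenever $a,b$ lie in different members; it is $D$-bounded if all members have diameter $\le D$. An $n$-dimensional control function of $X$ is $D_X\colon\mathbb R_+\to\mathbb R_+$ such that for every $r>0$ there are $r$-disjoint, $D_X(r)$-bounded families $\mathcal U_1,\dots,\mathcal U_{n+1}$ whose union covers $X$. For $k\ge n+1\ge1$, an $(n,k)$-dimensional control function of $X$ is $D_X\colon\mathbb R_+\to\mathbb R_+$ such that for every $r>0$ there are families $\mathcal U_1,\dots,\mathcal U_k$ of subsets of $X$, each $r$-disjoint and $D_X(r)$-bounded, such that every $x\in X$ belongs to members of at least $k-n$ of the families (equivalently, $\bigcup_{i\in T}\mathcal U_i$ covers $X$ for every $T\subset\{1,\dots,k\}$ with $|T|=n+1$). *)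

From Stdlib Require Import Reals List.
Import ListNotations.
Open Scope R_scope.

Definition is_metric {T : Type} (d : T -> T -> R) : Prop :=
  (forall x y, 0 <= d x y) /\
  (forall x y, d x y = 0 <-> x = y) /\
  (forall x y, d x y = d y x) /\
  (forall x y z, d x z <= d x y + d y z).

Definition family (T : Type) := (T -> Prop) -> Prop.

Definition r_disjoint {T : Type} (d : T -> T -> R) (r : R) (F : family T) : Prop :=
  forall U V a b, F U -> F V -> U <> V -> U a -> V b -> r <= d a b.

Definition D_bounded {T : Type} (d : T -> T -> R) (D : R) (F : family T) : Prop :=
  forall U a b, F U -> U a -> U b -> d a b <= D.

Definition in_family {T : Type} (F : family T) (x : T) : Prop :=
  exists U, F U /\ U x.

Definition n_control_function {T : Type} (d : T -> T -> R) (n : nat)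
  (DX : R -> R) : Prop :=
  (forall r, 0 < r -> 0 <= DX r) /\
  forall r, 0 < r ->
    exists U : nat -> family T,
      (forall i, (i < n + 1)%nat -> r_disjoint d r (U i) /\ D_bounded d (DX r) (U i)) /\
      (forall x, exists i, (i < n + 1)%nat /\ in_family (U i) x).

Definition nk_control_function {T : Type} (d : T -> T -> R) (n k : nat)
  (DX : R -> R) : Prop :=
  (forall r, 0 < r -> 0 <= DX r) /\
  forall r, 0 < r ->
    exists U : nat -> family T,
      (forall i, (i < k)%nat -> r_disjoint d r (U i) /\ D_bounded d (DX r) (U i)) /\
      (forall x, exists l : list nat,
          NoDup l /\ (k - n <= length l)%nat /\
          (forall i, In i l -> (i < k)%nat /\ in_family (U i) x)).

(* Given families U_0, ..., U_(k-1) witnessing an (n,k)-control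
   function at scale 3r, replace every member by its open r-neighbourhood: these
   families stay r-disjoint and grow in diameter by 2r.  Add one new family:
   call x saturated if it belongs to a member of U_i whenever it belongs to the
   r-neighbourhood of one, and split the saturated points according to which
   members of the U_i contain them.  Saturated points at distance < r lie in the
   same members, so these classes are r-disjoint, and each class lies inside a
   member of some U_i.  Every x now gains one more family: the new one if it is
   saturated, otherwise a thickened family U_i it was not covered by before. *)

From Pilot Require Import Defs.
From Stdlib Require Import Reals List Lra Lia Classical FunctionalExtensionality
  PropExtensionality.
Open Scope R_scope.

Lemma r_disjoint_le {T : Type} (d : T -> T -> R) (s s' : R) (F : Defs.family T) :
  s <= s' -> r_disjoint d s' F -> r_disjoint d s F.
Proof. intros Hss' Hdis U V a b HU HV HUV Ua Vb. specialize (Hdis U V a b HU HV HUV Ua Vb). lra. Qed.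

Lemma D_bounded_le {T : Type} (d : T -> T -> R) (D D' : R) (F : Defs.family T) :
  D <= D' -> D_bounded d D F -> D_bounded d D' F.
Proof. intros HDD' Hbd U a b HU Ua Ub. specialize (Hbd U a b HU Ua Ub). lra. Qed.

Section Thickening.

Context {T : Type} (d : T -> T -> R).
Hypothesis Hd : is_metric d.

Lemma dist_self (x : T) : d x x = 0.
Proof. apply (proj1 (proj2 Hd)). reflexivity. Qed.

Lemma dist_sym (x y : T) : d x y = d y x.
Proof. exact (proj1 (proj2 (proj2 Hd)) x y). Qed.

Lemma dist_triangle (x y z : T) : d x z <= d x y + d y z.
Proof. exact (proj2 (proj2 (proj2 Hd)) x y z). Qed.

Definition nbhd (r : R) (U : T -> Prop) : T -> Prop :=
  fun y => exists u, U u /\ d y u < r.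

Definition nbhd_family (r : R) (F : Defs.family T) : Defs.family T :=
  fun W => exists U, F U /\ W = nbhd r U.

Lemma in_family_nbhd (r : R) (F : Defs.family T) (x : T) :
  0 < r -> in_family F x -> in_family (nbhd_family r F) x.
Proof.
  intros Hr [U [HU Ux]]. exists (nbhd r U). split.
  - exists U. auto.
  - exists x. rewrite dist_self. auto.
Qed.

Lemma r_disjoint_nbhd_family (s r : R) (F : Defs.family T) :
  r_disjoint d (s + 2 * r) F -> r_disjoint d s (nbhd_family r F).
Proof.
  intros Hdis W W' a b [U [HU ->]] [U' [HU' ->]] HWW' [u [Uu Hau]] [u' [Uu' Hbu']].
  assert (HUU' : U <> U') by (intros <-; auto).
  specialize (Hdis U U' u u' HU HU' HUU' Uu Uu').
  pose proof (dist_triangle u a u'). pose proof (dist_triangle a b u').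
  rewrite (dist_sym u a) in *. lra.
Qed.

Lemma D_bounded_nbhd_family (D r : R) (F : Defs.family T) :
  D_bounded d D F -> D_bounded d (D + 2 * r) (nbhd_family r F).
Proof.
  intros Hbd W a b [U [HU ->]] [u [Uu Hau]] [u' [Uu' Hbu']].
  specialize (Hbd U u u' HU Uu Uu').
  pose proof (dist_triangle a u b). pose proof (dist_triangle u u' b).
  rewrite (dist_sym u' b) in *. lra.
Qed.

Variables (r : R) (k : nat) (U : nat -> Defs.family T).

Definition saturated (x : T) : Prop :=
  forall i, (i < k)%nat -> in_family (nbhd_family r (U i)) x -> in_family (U i) x.

Definition same_trace (x y : T) : Prop :=
  forall i V, (i < k)%nat -> U i V -> (V x <-> V y).

Definition trace_class (x : T) : T -> Prop :=
  fun y => saturated y /\ same_trace x y.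

Definition trace_family : Defs.family T :=
  fun S => exists x, saturated x /\ S = trace_class x.

Lemma same_trace_sym (x y : T) : same_trace x y -> same_trace y x.
Proof. intros Hxy i V Hi HV. symmetry. exact (Hxy i V Hi HV). Qed.

Lemma same_trace_trans (x y z : T) :
  same_trace x y -> same_trace y z -> same_trace x z.
Proof.
  intros Hxy Hyz i V Hi HV.
  specialize (Hxy i V Hi HV). specialize (Hyz i V Hi HV). tauto.
Qed.

Lemma trace_class_eq (x y : T) : same_trace x y -> trace_class x = trace_class y.
Proof.
  intros Hxy. apply functional_extensionality. intros z.
  apply propositional_extensionality. split; intros [Hz Htr]; split; auto.
  - exact (same_trace_trans y x z (same_trace_sym x y Hxy) Htr).
  - exact (same_trace_trans x y z Hxy Htr).
Qed.

Lemma D_bounded_trace_family (D : R) :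
  (forall i, (i < k)%nat -> D_bounded d D (U i)) ->
  (forall x, exists i, (i < k)%nat /\ in_family (U i) x) ->
  D_bounded d D trace_family.
Proof.
  intros Hbd Hcov S a b [x [_ ->]] [_ Hxa] [_ Hxb].
  destruct (Hcov a) as [i [Hi [V [HV Va]]]].
  assert (Vb : V b).
  { exact (proj1 (same_trace_trans a x b (same_trace_sym x a Hxa) Hxb i V Hi HV) Va). }
  exact (Hbd i Hi V a b HV Va Vb).
Qed.

Hypothesis U_disjoint : forall i, (i < k)%nat -> r_disjoint d r (U i).

(* [a] lies in the r-neighbourhood of [V], so saturation puts [b] in some
   member of [U i], which must be [V] by r-disjointness. *)
Lemma saturated_near_member (i : nat) (V : T -> Prop) (a b : T) :
  (i < k)%nat -> U i V -> saturated b -> d a b < r -> V a -> V b.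
Proof.
  intros Hi HV Hb Hab Va.
  destruct (Hb i Hi) as [V' [HV' V'b]].
  - exists (nbhd r V). split; [exists V; auto |].
    exists a. rewrite dist_sym. auto.
  - destruct (classic (V = V')) as [-> | HVV']; [exact V'b |].
    specialize (U_disjoint i Hi V V' a b HV HV' HVV' Va V'b). lra.
Qed.

Lemma saturated_near_same_trace (a b : T) :
  saturated a -> saturated b -> d a b < r -> same_trace a b.
Proof.
  intros Ha Hb Hab i V Hi HV. split.
  - exact (saturated_near_member i V a b Hi HV Hb Hab).
  - apply (saturated_near_member i V b a Hi HV Ha). rewrite dist_sym. exact Hab.
Qed.

Lemma r_disjoint_trace_family : r_disjoint d r trace_family.
Proof.
  intros S S' a b [x [_ ->]] [y [_ ->]] Hxy [Ha Hxa] [Hb Hyb].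
  destruct (Rlt_le_dec (d a b) r) as [Hab | Hab]; [exfalso | exact Hab].
  apply Hxy.
  rewrite (trace_class_eq x a Hxa), (trace_class_eq y b Hyb).
  exact (trace_class_eq a b (saturated_near_same_trace a b Ha Hb Hab)).
Qed.

End Thickening.

Section ExtendedCover.

Context {T : Type} (d : T -> T -> R) (r : R) (k : nat) (U : nat -> Defs.family T).

Definition extended_cover (j : nat) : Defs.family T :=
  if Nat.ltb j k then nbhd_family d r (U j) else trace_family d r k U.

Lemma extended_cover_lt (j : nat) :
  (j < k)%nat -> extended_cover j = nbhd_family d r (U j).
Proof. intros Hj. unfold extended_cover. destruct (Nat.ltb_spec j k); [reflexivity | lia]. Qed.

Lemma extended_cover_k : extended_cover k = trace_family d r k U.
Proof. unfold extended_cover. destruct (Nat.ltb_spec k k); [lia | reflexivity]. Qed.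

Hypothesis Hd : is_metric d.
Hypothesis Hr : 0 < r.

Lemma extended_cover_multiplicity (x : T) (l : list nat) :
  NoDup l -> (forall i, In i l -> (i < k)%nat /\ in_family (U i) x) ->
  exists l', NoDup l' /\ length l' = S (length l) /\
    (forall i, In i l' -> (i < S k)%nat /\ in_family (extended_cover i) x).
Proof.
  intros Hnd Hl.
  assert (Hold : forall i, In i l -> (i < S k)%nat /\ in_family (extended_cover i) x).
  { intros i Hin. destruct (Hl i Hin) as [Hi Hx]. split; [lia |].
    rewrite extended_cover_lt by exact Hi. exact (in_family_nbhd d Hd r (U i) x Hr Hx). }
  destruct (classic (saturated d r k U x)) as [Hsat | Hunsat].
  - exists (k :: l). split; [| split; [reflexivity |]].
    + constructor; [| exact Hnd]. intros Hin. destruct (Hl k Hin). lia.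
    + intros i [<- | Hin]; [| exact (Hold i Hin)].
      split; [lia |]. rewrite extended_cover_k.
      exists (trace_class d r k U x). split.
      * exists x. auto.
      * split; [exact Hsat | intros j V _ _; tauto].
  - apply not_all_ex_not in Hunsat. destruct Hunsat as [i0 Hgap].
    apply imply_to_and in Hgap. destruct Hgap as [Hi0 Hgap].
    apply imply_to_and in Hgap. destruct Hgap as [Hnbhd Hnot].
    exists (i0 :: l). split; [| split; [reflexivity |]].
    + constructor; [| exact Hnd]. intros Hin. exact (Hnot (proj2 (Hl i0 Hin))).
    + intros i [<- | Hin]; [| exact (Hold i Hin)].
      split; [lia |]. rewrite extended_cover_lt by exact Hi0. exact Hnbhd.
Qed.

End ExtendedCover.

Lemma nk_control_function_S (T : Type) (d : T -> T -> R) (Hd : is_metric d)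
  (n k : nat) (Dk Dk1 : R -> R) :
  (n + 1 <= k)%nat ->
  (forall r, 0 < r -> Dk1 r = Dk (3 * r) + 2 * r) ->
  nk_control_function d n k Dk -> nk_control_function d n (S k) Dk1.
Proof.
  intros Hk HD [Hnn Hcover].
  assert (HD' : forall r, 0 < r -> Dk (3 * r) <= Dk1 r /\ 0 <= Dk1 r).
  { intros r Hr. rewrite HD by exact Hr. assert (0 <= Dk (3 * r)) by (apply Hnn; lra). lra. }
  split; [intros r Hr; apply HD'; exact Hr |].
  intros r Hr. destruct (Hcover (3 * r)) as [U [HU Hmult]]; [lra |].
  exists (extended_cover d r k U). split.
  - intros i Hi. destruct (Nat.ltb_spec i k) as [Hik | Hik].
    + rewrite extended_cover_lt by exact Hik. destruct (HU i Hik) as [Hdis Hbd].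
      rewrite HD by exact Hr. split.
      * apply r_disjoint_nbhd_family; [exact Hd |].
        replace (r + 2 * r) with (3 * r) by ring. exact Hdis.
      * apply D_bounded_nbhd_family; [exact Hd | exact Hbd].
    + replace i with k by lia. rewrite extended_cover_k. split.
      * apply r_disjoint_trace_family; [exact Hd |].
        intros j Hj. apply (r_disjoint_le d r (3 * r)); [lra | apply HU; exact Hj].
      * apply (D_bounded_le d (Dk (3 * r))); [apply HD'; exact Hr |].
        apply D_bounded_trace_family; [intros j Hj; apply HU; exact Hj |].
        intros x. destruct (Hmult x) as [[| j l] [_ [Hlen Hl]]]; [simpl in Hlen; lia |].
        exists j. apply Hl. left. reflexivity.
  - intros x. destruct (Hmult x) as [l [Hnd [Hlen Hl]]].
    destruct (extended_cover_multiplicity d r k U Hd Hr x l Hnd Hl) as [l' [Hnd' [Hlen' Hl']]].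
    exists l'. split; [exact Hnd' | split; [lia | exact Hl']].
Qed.

Lemma n_control_function_nk (T : Type) (d : T -> T -> R) (n : nat) (D : R -> R) :
  n_control_function d n D -> nk_control_function d n (n + 1) D.
Proof.
  intros [Hnn Hcover]. split; [exact Hnn |].
  intros r Hr. destruct (Hcover r Hr) as [U [HU Hcov]].
  exists U. split; [exact HU |].
  intros x. destruct (Hcov x) as [i [Hi Hx]].
  exists (i :: nil). split; [| split].
  - constructor; [intros [] | constructor].
  - simpl. lia.
  - intros j [<- | []]. auto.
Qed.

Theorem mainTheorem6 (T : Type) (d : T -> T -> R) (Hd : is_metric d) (n : nat)
  (D : nat -> R -> R)
  (Hbase : n_control_function d n (D (n + 1)%nat))
  (Hrec : forall i, (n + 1 <= i)%nat -> forall r, 0 < r ->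
            D (S i) r = D i (3 * r) + 2 * r) :
  forall k, (n + 1 <= k)%nat -> nk_control_function d n k (D k).
Proof.
  intros k Hk. induction Hk as [| k Hk IH].
  - exact (n_control_function_nk T d n _ Hbase).
  - exact (nk_control_function_S T d Hd n k (D k) (D (S k)) Hk (Hrec k Hk) IH).
Qed.
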